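(* Let $(X,d)$ be a bicomplete quasi-pseudometric space. Let $J:X\to X$ be a continuous single-valued map such that $r\,d(x,y)\le d(Jx,Jy)$ for all $x,y\in X$, for some constant $r>0$. Let $F:X\to CB(X)$ be a set-valued map such that $$H(Fx,Fy)\le \alpha\big[d(Jx,Fx)+d(Jy,Fy)\big]\quad\text{for all }x,y\in X,$$ where $\alpha\in(0,1/2)$. If $J$ and $F$ have the approximate mix-point property, then $F$ has a $J$-fixed point, i.e. there is $x\in X$ with $Jx\in Fx$.
   Context: A quasi-pseudometric on a nonempty set $X$ is a map $d:X\times X\to[0,\infty)$ with $d(x,x)=0$ and $d(x,z)\le d(x,y)+d(y,z)$ for all $x,y,z$; it is $T_0$ if $d(x,y)=0=d(y,x)$ implies $x=y$. Write $d^s(x,y)=\max\{d(x,y),d(y,x)\}$. The space $(X,d)$ is bicomplete if $d$ is $T_0$ and the metric $d^s$ is complete. For $x\in X$ and nonempty $A\subseteq X$: $d(x,A)=\inf_{a\in A}d(x,a)$, $d(A,x)=\inf_{a\in A}d(a,x)$. For nonempty $A,B\subseteq X$: $H(A,B)=\max\{\sup_{a\in A}d(a,B),\ \sup_{b\in B}d(A,b)\}$. $CB(X)$ denotes the family of nonempty $d^s$-bounded, $\tau(d^s)$-closed subsets of $X$; continuity of $J$ is with respect to $\tau(d^s)$. $J$ and $F$ have the approximate mix-point property if $\inf_{x\in X}\sup_{y\in Fx}d^s(Jx,y)=0$. *)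

From Stdlib Require Import Reals Lra Classical ClassicalEpsilon.
Open Scope R_scope.
Set Implicit Arguments.

(** Infimum / supremum of a set of reals (classically chosen; 0 if it does not exist). *)
Definition is_inf (E : R -> Prop) (l : R) : Prop :=
  (forall y, E y -> l <= y) /\ (forall l', (forall y, E y -> l' <= y) -> l' <= l).
Definition is_sup (E : R -> Prop) (l : R) : Prop :=
  (forall y, E y -> y <= l) /\ (forall l', (forall y, E y -> y <= l') -> l <= l').

Definition Rinf (E : R -> Prop) : R :=
  match excluded_middle_informative (exists l, is_inf E l) with
  | left h => proj1_sig (constructive_indefinite_description _ h)
  | right _ => 0
  end.
Definition Rsup (E : R -> Prop) : R :=
  match excluded_middle_informative (exists l, is_sup E l) with
  | left h => proj1_sig (constructive_indefinite_description _ h)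
  | right _ => 0
  end.

Section QPM.
Variable X : Type.
Variable d : X -> X -> R.

Definition quasi_pseudometric : Prop :=
  (forall x y, 0 <= d x y) /\ (forall x, d x x = 0) /\
  (forall x y z, d x z <= d x y + d y z).

Definition T0 : Prop := forall x y, d x y = 0 -> d y x = 0 -> x = y.

Definition ds (x y : X) : R := Rmax (d x y) (d y x).

Definition ds_cauchy (u : nat -> X) : Prop :=
  forall eps, eps > 0 -> exists N, forall m n, (m >= N)%nat -> (n >= N)%nat -> ds (u m) (u n) < eps.
Definition ds_converges (u : nat -> X) (l : X) : Prop :=
  forall eps, eps > 0 -> exists N, forall n, (n >= N)%nat -> ds (u n) l < eps.

Definition bicomplete : Prop :=
  T0 /\ forall u, ds_cauchy u -> exists l, ds_converges u l.

Definition d_pt_set (x : X) (A : X -> Prop) : R := Rinf (fun t => exists a, A a /\ t = d x a).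
Definition d_set_pt (A : X -> Prop) (x : X) : R := Rinf (fun t => exists a, A a /\ t = d a x).
Definition Hd (A B : X -> Prop) : R :=
  Rmax (Rsup (fun t => exists a, A a /\ t = d_pt_set a B))
       (Rsup (fun t => exists b, B b /\ t = d_set_pt A b)).

Definition ds_closed (A : X -> Prop) : Prop :=
  forall x, (forall eps, eps > 0 -> exists a, A a /\ ds x a < eps) -> A x.
Definition in_CB (A : X -> Prop) : Prop :=
  (exists a, A a) /\ (exists M, forall a b, A a -> A b -> ds a b <= M) /\ ds_closed A.

Definition ds_continuous (J : X -> X) : Prop :=
  forall x eps, eps > 0 -> exists delta, delta > 0 /\
    forall y, ds x y < delta -> ds (J x) (J y) < eps.

Definition approx_mix_point (J : X -> X) (F : X -> X -> Prop) : Prop :=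
  Rinf (fun t => exists x, t = Rsup (fun s => exists y, F x y /\ s = ds (J x) y)) = 0.
End QPM.

(* Pick points x_n with sup_{y in F x_n} d^s(J x_n, y) < 1/(n+1).  The contraction
   condition forces d(J x_m, J x_n) < 3 (e_m + e_n), and the expansiveness of J
   transfers this to x_m, x_n, so (x_n) is d^s-Cauchy with some limit u.  For
   y in F u, comparing F u with F x_n through the same condition gives
   d^s(J u, y) < 2 d^s(J u, J x_n) + 5 e_n, which tends to 0 by continuity of J;
   by T0, J u = y. *)
From Stdlib Require Import Reals Lra Lia Classical ClassicalEpsilon.
Open Scope R_scope.
Set Implicit Arguments.
Unset Strict Implicit.

Lemma is_inf_exists (E : R -> Prop) (m : R) :
  (exists y, E y) -> (forall y, E y -> m <= y) -> exists l, is_inf E l.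
Proof.
  intros [y0 Hy0] Hlb.
  destruct (completeness (fun z => E (- z))) as [s [Hub Hleast]].
  - exists (- m). intros z Hz. specialize (Hlb _ Hz). lra.
  - exists (- y0). now rewrite Ropp_involutive.
  - exists (- s). split.
    + intros y Hy. assert (- y <= s) by (apply Hub; now rewrite Ropp_involutive). lra.
    + intros l' Hl'.
      assert (s <= - l') by (apply Hleast; intros z Hz; specialize (Hl' _ Hz); lra).
      lra.
Qed.

Lemma is_sup_exists (E : R -> Prop) (M : R) :
  (exists y, E y) -> (forall y, E y -> y <= M) -> exists l, is_sup E l.
Proof.
  intros Hne Hub.
  destruct (completeness E (ex_intro _ M Hub) Hne) as [s [Hs Hleast]].
  exists s. split; [exact Hs | exact Hleast].
Qed.

Lemma Rinf_is_inf (E : R -> Prop) (m : R) :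
  (exists y, E y) -> (forall y, E y -> m <= y) -> is_inf E (Rinf E).
Proof.
  intros Hne Hlb. unfold Rinf.
  destruct (excluded_middle_informative _) as [h | h].
  - exact (proj2_sig (constructive_indefinite_description _ h)).
  - exfalso. exact (h (is_inf_exists Hne Hlb)).
Qed.

Lemma Rsup_is_sup (E : R -> Prop) (M : R) :
  (exists y, E y) -> (forall y, E y -> y <= M) -> is_sup E (Rsup E).
Proof.
  intros Hne Hub. unfold Rsup.
  destruct (excluded_middle_informative _) as [h | h].
  - exact (proj2_sig (constructive_indefinite_description _ h)).
  - exfalso. exact (h (is_sup_exists Hne Hub)).
Qed.

Lemma is_inf_approx (E : R -> Prop) (l eps : R) :
  is_inf E l -> 0 < eps -> exists y, E y /\ y < l + eps.
Proof.
  intros [_ Hgreatest] Heps. apply NNPP. intro Hnone.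
  assert (l + eps <= l); [|lra].
  apply Hgreatest. intros y Hy. apply Rnot_lt_le. intro Hlt. apply Hnone. eauto.
Qed.

Lemma inv_succ_pos (n : nat) : 0 < / (INR n + 1).
Proof. apply Rinv_0_lt_compat. pose proof (pos_INR n). lra. Qed.

Lemma inv_succ_eventually_lt (c : R) :
  0 < c -> exists N, forall n, (n >= N)%nat -> / (INR n + 1) < c.
Proof.
  intros Hc. destruct (archimed_cor1 c Hc) as [N [HN HN0]].
  exists N. intros n Hn.
  assert (INR N <= INR n) by (apply le_INR; lia).
  assert (0 < INR N) by (apply lt_0_INR; lia).
  assert (/ (INR n + 1) < / INR N) by (apply Rinv_lt_contravar; nra).
  lra.
Qed.

Section QuasiPseudometric.
Variables (X : Type) (d : X -> X -> R).
Hypothesis Hq : quasi_pseudometric d.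

Lemma d_nonneg (x y : X) : 0 <= d x y.
Proof. apply Hq. Qed.

Lemma d_triangle (x y z : X) : d x z <= d x y + d y z.
Proof. apply Hq. Qed.

Lemma d_le_ds (x y : X) : d x y <= ds d x y.
Proof. apply Rmax_l. Qed.

Lemma d_le_ds_rev (x y : X) : d y x <= ds d x y.
Proof. apply Rmax_r. Qed.

Lemma ds_sym (x y : X) : ds d x y = ds d y x.
Proof. apply Rmax_comm. Qed.

Lemma ds_nonneg (x y : X) : 0 <= ds d x y.
Proof. pose proof (d_nonneg x y). pose proof (d_le_ds x y). lra. Qed.

Lemma ds_triangle (x y z : X) : ds d x z <= ds d x y + ds d y z.
Proof.
  pose proof (d_triangle x y z). pose proof (d_triangle z y x).
  pose proof (d_le_ds x y). pose proof (d_le_ds_rev x y).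
  pose proof (d_le_ds y z). pose proof (d_le_ds_rev y z).
  apply Rmax_lub; lra.
Qed.

Lemma ds_lt_of_lt (x y : X) (c : R) : d x y < c -> d y x < c -> ds d x y < c.
Proof. apply Rmax_lub_lt. Qed.

Lemma eq_of_ds_le0 (x y : X) : T0 d -> ds d x y <= 0 -> x = y.
Proof.
  intros HT0 Hds. pose proof (d_nonneg x y). pose proof (d_nonneg y x).
  pose proof (d_le_ds x y). pose proof (d_le_ds_rev x y).
  apply HT0; lra.
Qed.

Lemma d_pt_set_is_inf (x : X) (A : X -> Prop) :
  (exists a, A a) -> is_inf (fun t => exists a, A a /\ t = d x a) (d_pt_set d x A).
Proof.
  intros [a Ha]. apply Rinf_is_inf with (m := 0); [eauto|].
  intros t [b [_ ->]]. apply d_nonneg.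
Qed.

Lemma d_set_pt_is_inf (A : X -> Prop) (x : X) :
  (exists a, A a) -> is_inf (fun t => exists a, A a /\ t = d a x) (d_set_pt d A x).
Proof.
  intros [a Ha]. apply Rinf_is_inf with (m := 0); [eauto|].
  intros t [b [_ ->]]. apply d_nonneg.
Qed.

Lemma d_pt_set_le (x a : X) (A : X -> Prop) : A a -> d_pt_set d x A <= d x a.
Proof. intros Ha. apply (d_pt_set_is_inf x (ex_intro _ a Ha)). eauto. Qed.

Lemma d_set_pt_le (x a : X) (A : X -> Prop) : A a -> d_set_pt d A x <= d a x.
Proof. intros Ha. apply (d_set_pt_is_inf x (ex_intro _ a Ha)). eauto. Qed.

Lemma d_pt_set_nonneg (x : X) (A : X -> Prop) : (exists a, A a) -> 0 <= d_pt_set d x A.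
Proof. intros Hne. apply (d_pt_set_is_inf x Hne). intros t [b [_ ->]]. apply d_nonneg. Qed.

Lemma d_pt_set_le_Hd (A B : X -> Prop) (a : X) :
  in_CB d A -> in_CB d B -> A a -> d_pt_set d a B <= Hd d A B.
Proof.
  intros [[a0 Ha0] [[M HM] _]] [[b0 Hb0] _] Ha.
  eapply Rle_trans; [|apply Rmax_l].
  apply Rsup_is_sup with (M := M + d a0 b0); [eauto| |eauto].
  intros t [a' [Ha' ->]].
  pose proof (d_pt_set_le a' Hb0). pose proof (d_triangle a' a0 b0).
  pose proof (d_le_ds a' a0). pose proof (HM a' a0 Ha' Ha0). lra.
Qed.

Lemma d_set_pt_le_Hd (A B : X -> Prop) (b : X) :
  in_CB d A -> in_CB d B -> B b -> d_set_pt d A b <= Hd d A B.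
Proof.
  intros [[a0 Ha0] _] [[b0 Hb0] [[M HM] _]] Hb.
  eapply Rle_trans; [|apply Rmax_r].
  apply Rsup_is_sup with (M := d a0 b0 + M); [eauto| |eauto].
  intros t [b' [Hb' ->]].
  pose proof (d_set_pt_le b' Ha0). pose proof (d_triangle a0 b0 b').
  pose proof (d_le_ds b0 b'). pose proof (HM b0 b' Hb0 Hb'). lra.
Qed.

Lemma Hd_approx_l (A B : X -> Prop) (a : X) (eps : R) :
  in_CB d A -> in_CB d B -> A a -> 0 < eps -> exists b, B b /\ d a b < Hd d A B + eps.
Proof.
  intros HA HB Ha Heps.
  destruct (is_inf_approx (d_pt_set_is_inf a (proj1 HB)) Heps) as [t [[b [Hb ->]] Hlt]].
  pose proof (d_pt_set_le_Hd HA HB Ha). exists b. split; [exact Hb | lra].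
Qed.

Lemma Hd_approx_r (A B : X -> Prop) (b : X) (eps : R) :
  in_CB d A -> in_CB d B -> B b -> 0 < eps -> exists a, A a /\ d a b < Hd d A B + eps.
Proof.
  intros HA HB Hb Heps.
  destruct (is_inf_approx (d_set_pt_is_inf b (proj1 HA)) Heps) as [t [[a [Ha ->]] Hlt]].
  pose proof (d_set_pt_le_Hd HA HB Hb). exists a. split; [exact Ha | lra].
Qed.

Lemma ds_continuous_converges (J : X -> X) (u : nat -> X) (l : X) :
  ds_continuous d J -> ds_converges d u l -> ds_converges d (fun n => J (u n)) (J l).
Proof.
  intros HJ Hu eps Heps.
  destruct (HJ l eps Heps) as [delta [Hdelta HJl]].
  destruct (Hu delta Hdelta) as [N HN].
  exists N. intros n Hn. rewrite ds_sym. apply HJl. rewrite ds_sym. auto.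
Qed.

End QuasiPseudometric.

Section MixPoints.
Variables (X : Type) (d : X -> X -> R) (J : X -> X) (F : X -> X -> Prop) (alpha : R).
Hypothesis Hq : quasi_pseudometric d.
Hypothesis HFcb : forall x, in_CB d (F x).
Hypothesis Halpha : 0 < alpha < 1 / 2.
Hypothesis HF : forall x y,
  Hd d (F x) (F y) <= alpha * (d_pt_set d (J x) (F x) + d_pt_set d (J y) (F y)).

Definition mix_point_within (e : R) (x : X) : Prop := forall y, F x y -> ds d (J x) y < e.

Let gap (x : X) : R := d_pt_set d (J x) (F x).

Lemma gap_nonneg (x : X) : 0 <= gap x.
Proof. apply (d_pt_set_nonneg Hq), HFcb. Qed.

Lemma gap_lt_of_mix (e : R) (x : X) : mix_point_within e x -> gap x < e.
Proof.
  intros Hx. destruct (proj1 (HFcb x)) as [a Ha].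
  pose proof (d_pt_set_le Hq (J x) Ha). pose proof (Hx a Ha). pose proof (d_le_ds d (J x) a).
  unfold gap. lra.
Qed.

Lemma exists_mix_point_within (e : R) :
  inhabited X -> approx_mix_point d J F -> 0 < e -> exists x, mix_point_within e x.
Proof.
  intros [x0] Hmix He.
  set (S x := Rsup (fun s => exists y, F x y /\ s = ds d (J x) y)).
  assert (HS : forall x, is_sup (fun s => exists y, F x y /\ s = ds d (J x) y) (S x)).
  { intros x. destruct (HFcb x) as [[a Ha] [[M HM] _]].
    apply Rsup_is_sup with (M := ds d (J x) a + M); [eauto|].
    intros s [y [Hy ->]]. pose proof (ds_triangle Hq (J x) a y). pose proof (HM a y Ha Hy). lra. }
  assert (Hinf : is_inf (fun t => exists x, t = S x) 0).
  { rewrite <- Hmix. apply Rinf_is_inf with (m := 0); [exists (S x0), x0; reflexivity|].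
    intros t [x ->]. destruct (proj1 (HFcb x)) as [a Ha].
    pose proof (proj1 (HS x) _ (ex_intro _ a (conj Ha eq_refl))).
    pose proof (ds_nonneg Hq (J x) a). unfold S in *. lra. }
  destruct (is_inf_approx Hinf He) as [t [[x ->] Hx]].
  exists x. intros y Hy. pose proof (proj1 (HS x) _ (ex_intro _ y (conj Hy eq_refl))). lra.
Qed.

Lemma mix_points_d_close (e1 e2 : R) (x x' : X) :
  0 < e1 -> mix_point_within e1 x -> mix_point_within e2 x' -> d (J x) (J x') < 3 * (e1 + e2).
Proof.
  intros He1 Hx Hx'. destruct (proj1 (HFcb x)) as [a Ha].
  destruct (Hd_approx_l Hq (HFcb x) (HFcb x') Ha He1) as [b [Hb Hab]].
  pose proof (gap_lt_of_mix Hx). pose proof (gap_lt_of_mix Hx').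
  pose proof (gap_nonneg x). pose proof (gap_nonneg x').
  assert (Hd d (F x) (F x') <= e1 + e2) by (pose proof (HF x x'); unfold gap in *; nra).
  pose proof (Hx a Ha). pose proof (d_le_ds d (J x) a).
  pose proof (Hx' b Hb). pose proof (d_le_ds_rev d (J x') b).
  pose proof (d_triangle Hq (J x) a (J x')). pose proof (d_triangle Hq a b (J x')).
  lra.
Qed.

Lemma mix_points_ds_close (e1 e2 : R) (x x' : X) :
  0 < e1 -> 0 < e2 -> mix_point_within e1 x -> mix_point_within e2 x' ->
  ds d (J x) (J x') < 3 * (e1 + e2).
Proof.
  intros He1 He2 Hx Hx'. apply ds_lt_of_lt.
  - exact (mix_points_d_close He1 Hx Hx').
  - rewrite Rplus_comm. exact (mix_points_d_close He2 Hx' Hx).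
Qed.

(* Both directions of d^s(J z, y) are estimated by passing through J x and a point of F x
   that is Hausdorff-close to y. *)
Lemma ds_image_value_lt_with_gap (e : R) (x z y : X) :
  0 < e -> mix_point_within e x -> F z y ->
  ds d (J z) y < ds d (J z) (J x) + 2 * e + alpha * (e + gap z).
Proof.
  intros He Hx Hy. pose proof (gap_lt_of_mix Hx). pose proof (gap_nonneg x).
  pose proof (d_le_ds d (J z) (J x)). pose proof (d_le_ds_rev d (J z) (J x)).
  apply ds_lt_of_lt.
  - destruct (Hd_approx_r Hq (HFcb x) (HFcb z) Hy He) as [c [Hc Hcy]].
    assert (Hd d (F x) (F z) <= alpha * (e + gap z)) by (pose proof (HF x z); unfold gap in *; nra).
    pose proof (Hx c Hc). pose proof (d_le_ds d (J x) c).
    pose proof (d_triangle Hq (J z) (J x) y). pose proof (d_triangle Hq (J x) c y).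
    lra.
  - destruct (Hd_approx_l Hq (HFcb z) (HFcb x) Hy He) as [c [Hc Hyc]].
    assert (Hd d (F z) (F x) <= alpha * (e + gap z)) by (pose proof (HF z x); unfold gap in *; nra).
    pose proof (Hx c Hc). pose proof (d_le_ds_rev d (J x) c).
    pose proof (d_triangle Hq y (J x) (J z)). pose proof (d_triangle Hq y c (J x)).
    lra.
Qed.

(* Apply the previous bound to one point of F z to control gap z, then feed that back in;
   alpha < 1/2 keeps the constants finite. *)
Lemma ds_image_value_lt (e : R) (x z y : X) :
  0 < e -> mix_point_within e x -> F z y -> ds d (J z) y < 2 * ds d (J z) (J x) + 5 * e.
Proof.
  intros He Hx Hy. pose proof (gap_nonneg z). pose proof (ds_nonneg Hq (J z) (J x)).
  assert (Hgap_z : gap z < 2 * ds d (J z) (J x) + 5 * e).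
  { pose proof (d_pt_set_le Hq (J z) Hy). pose proof (d_le_ds d (J z) y).
    pose proof (ds_image_value_lt_with_gap He Hx Hy). unfold gap in *. nra. }
  pose proof (ds_image_value_lt_with_gap He Hx Hy). nra.
Qed.

End MixPoints.

Lemma ds_cauchy_of_expansive_image (X : Type) (d : X -> X -> R) (J : X -> X) (r : R)
    (u : nat -> X) :
  0 < r -> (forall x y, r * d x y <= d (J x) (J y)) ->
  ds_cauchy d (fun n => J (u n)) -> ds_cauchy d u.
Proof.
  intros Hr HJr HJu eps Heps.
  destruct (HJu (r * eps)) as [N HN]; [nra|].
  exists N. intros m n Hm Hn. pose proof (HN m n Hm Hn).
  pose proof (HJr (u m) (u n)). pose proof (HJr (u n) (u m)).
  pose proof (d_le_ds d (J (u m)) (J (u n))). pose proof (d_le_ds_rev d (J (u m)) (J (u n))).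
  apply ds_lt_of_lt; apply Rmult_lt_reg_l with r; lra.
Qed.

Theorem mainTheorem7 (X : Type) (d : X -> X -> R) (J : X -> X) (F : X -> X -> Prop)
  (r alpha : R)
  (HX : inhabited X)
  (Hqpm : quasi_pseudometric d)
  (Hbic : bicomplete d)
  (HJc : ds_continuous d J)
  (Hr : 0 < r)
  (HJr : forall x y, r * d x y <= d (J x) (J y))
  (HFcb : forall x, in_CB d (F x))
  (Halpha : 0 < alpha < 1 / 2)
  (HF : forall x y, Hd d (F x) (F y) <= alpha * (d_pt_set d (J x) (F x) + d_pt_set d (J y) (F y)))
  (Hmix : approx_mix_point d J F) :
  exists x, F x (J x).
Proof.
  set (e n := / (INR n + 1)).
  assert (Hxs : forall n, exists x, mix_point_within d J F (e n) x)
    by (intros n; apply exists_mix_point_within; auto; apply inv_succ_pos).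
  destruct (choice _ Hxs) as [xs Hxs_mix].
  assert (HJcauchy : ds_cauchy d (fun n => J (xs n))).
  { intros eps Heps. destruct (inv_succ_eventually_lt (c := eps / 6)) as [N HN]; [lra|].
    exists N. intros m n Hm Hn. pose proof (HN m Hm). pose proof (HN n Hn).
    pose proof (mix_points_ds_close Hqpm HFcb Halpha HF (inv_succ_pos m) (inv_succ_pos n)
                  (Hxs_mix m) (Hxs_mix n)).
    unfold e in *. lra. }
  destruct Hbic as [HT0 Hcomplete].
  destruct (Hcomplete xs (ds_cauchy_of_expansive_image Hr HJr HJcauchy)) as [u Hu].
  pose proof (ds_continuous_converges HJc Hu) as HJu.
  destruct (proj1 (HFcb u)) as [y Hy].
  exists u. replace (J u) with y; [exact Hy|].
  symmetry. apply (eq_of_ds_le0 Hqpm HT0), Rle_plus_epsilon. intros eps Heps.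
  destruct (HJu (eps / 4)) as [N1 HN1]; [lra|].
  destruct (inv_succ_eventually_lt (c := eps / 10)) as [N2 HN2]; [lra|].
  set (n := max N1 N2).
  pose proof (HN1 n (Nat.le_max_l _ _)). pose proof (HN2 n (Nat.le_max_r _ _)).
  pose proof (ds_image_value_lt Hqpm HFcb Halpha HF (inv_succ_pos n) (Hxs_mix n) Hy).
  rewrite ds_sym in *. unfold e in *. lra.
Qed.
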